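(* Let $K\subset\mathbb{R}^n$ be a nonempty convex set and $c>0$ fixed. Then the function $\varepsilon\mapsto M^{\operatorname{loc}}(\varepsilon)$ on $(0,\infty)$ is monotone non-increasing.
   Context: $B(\theta,r)$ is the closed Euclidean ball. $M(\delta,S)$ is the largest cardinality of a $\delta$-packing of $S$ (distinct points at Euclidean distance $\ge\delta$); $M^{\operatorname{loc}}(\varepsilon)=\sup_{\theta\in K}M(\varepsilon/c,B(\theta,\varepsilon)\cap K)$. *)

From HB Require Import structures.
From mathcomp Require Import all_boot all_order all_algebra.
From mathcomp Require Import all_classical all_reals ereal.
Set Implicit Arguments. Unset Strict Implicit. Unset Printing Implicit Defensive.
Import Order.TTheory GRing.Theory Num.Theory.
Local Open Scope classical_set_scope.
Local Open Scope ring_scope.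

Definition edist (R : realType) (n : nat) (x y : 'rV[R]_n) : R :=
  Num.sqrt (\sum_(i < n) (x ord0 i - y ord0 i) ^+ 2).

Definition eball (R : realType) (n : nat) (theta : 'rV[R]_n) (r : R)
  : set 'rV[R]_n := [set y | edist theta y <= r].

Definition convex_set (R : realType) (n : nat) (K : set 'rV[R]_n) : Prop :=
  forall x y (t : R), K x -> K y -> 0 <= t <= 1 ->
    K (t *: x + (1 - t) *: y).

Definition is_packing (R : realType) (n : nat) (delta : R)
  (S : set 'rV[R]_n) (P : seq 'rV[R]_n) : Prop :=
  uniq P /\ (forall x, x \in P -> S x) /\
  (forall x y, x \in P -> y \in P -> x != y -> delta <= edist x y).

(* M(delta, S): largest cardinality of a delta-packing (in \bar R, so that it
   is +oo if packings of arbitrarily large size exist) *)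
Definition packing_number (R : realType) (n : nat) (delta : R)
  (S : set 'rV[R]_n) : \bar R :=
  ereal_sup [set ((size P)%:R)%:E | P in is_packing delta S].

Definition Mloc (R : realType) (n : nat) (K : set 'rV[R]_n) (c eps : R)
  : \bar R :=
  ereal_sup [set packing_number (eps / c) (eball theta eps `&` K) | theta in K].

From HB Require Import structures.
From mathcomp Require Import all_boot all_order all_algebra.
From mathcomp Require Import all_classical all_reals ereal.
Set Implicit Arguments. Unset Strict Implicit. Unset Printing Implicit Defensive.
Import Order.TTheory GRing.Theory Num.Theory.
Local Open Scope classical_set_scope.
Local Open Scope ring_scope.

(* For eps1 <= eps2 and theta in K, the homothety of center theta and ratio
   t = eps1 / eps2 maps B(theta, eps2) ∩ K into B(theta, eps1) ∩ K (by
   convexity of K) and multiplies all distances by t, so it turns an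
   (eps2/c)-packing of the big set into an (eps1/c)-packing of the small one
   of the same size. *)

Lemma ereal_sup_image_le (R : realType) (S T : Type) (f : S -> \bar R)
    (g : T -> \bar R) (A : set S) (B : set T) :
  (forall x, A x -> exists2 y, B y & (f x <= g y)%E) ->
  (ereal_sup (f @` A) <= ereal_sup (g @` B))%E.
Proof.
move=> fg; apply: ge_ereal_sup => _ [x Ax <-].
have [y By fxy] := fg x Ax.
by apply: le_ereal_sup_tmp; exists (g y) => //; exists y.
Qed.

Section Homothety.
Variables (R : realType) (n : nat).
Implicit Types (x y z theta : 'rV[R]_n) (t : R).

Lemma edistDr x y z : edist (x + z) (y + z) = edist x y.
Proof.
rewrite /edist; congr Num.sqrt; apply: eq_bigr => i _.
by rewrite !mxE opprD addrACA subrr addr0.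
Qed.

Lemma edistZ t x y : edist (t *: x) (t *: y) = `|t| * edist x y.
Proof.
rewrite /edist; under eq_bigr => i _ do rewrite !mxE -mulrBr exprMn.
by rewrite -mulr_sumr sqrtrM ?sqr_ge0 // sqrtr_sqr.
Qed.

Definition homothety theta t x := t *: x + (1 - t) *: theta.

Lemma homothety_center theta t : homothety theta t theta = theta.
Proof. by rewrite /homothety -scalerDl addrC subrK scale1r. Qed.

Lemma homothety_inj theta t : t != 0 -> injective (homothety theta t).
Proof. by move=> t0 x y /addIr /scalerI; apply. Qed.

Lemma edist_homothety theta t x y : 0 <= t ->
  edist (homothety theta t x) (homothety theta t y) = t * edist x y.
Proof. by move=> t0; rewrite /homothety edistDr edistZ ger0_norm. Qed.

Lemma homothety_convex (K : set 'rV[R]_n) theta t x :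
  convex_set K -> K theta -> 0 <= t <= 1 -> K x -> K (homothety theta t x).
Proof. by move=> cK Ktheta t01 Kx; apply: cK. Qed.

End Homothety.

Section Packing.
Variables (R : realType) (n : nat).

Lemma is_packing_map (f : 'rV[R]_n -> 'rV[R]_n) (t delta : R)
    (S S' : set 'rV[R]_n) (P : seq 'rV[R]_n) :
  0 <= t -> injective f -> (forall x, S x -> S' (f x)) ->
  (forall x y, edist (f x) (f y) = t * edist x y) ->
  is_packing delta S P -> is_packing (t * delta) S' (map f P).
Proof.
move=> t0 finj fS fdist [uP [PS Pdist]]; split; first by rewrite map_inj_uniq.
split; first by move=> _ /mapP [x xP ->]; apply/fS/PS.
move=> _ _ /mapP [x xP ->] /mapP [y yP ->] fxy.
rewrite fdist ler_wpM2l // Pdist //.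
by apply: contraNneq fxy => ->.
Qed.

Lemma packing_number_le_map (f : 'rV[R]_n -> 'rV[R]_n) (t delta : R)
    (S S' : set 'rV[R]_n) :
  0 <= t -> injective f -> (forall x, S x -> S' (f x)) ->
  (forall x y, edist (f x) (f y) = t * edist x y) ->
  (packing_number delta S <= packing_number (t * delta) S')%E.
Proof.
move=> t0 finj fS fdist; apply: ereal_sup_image_le => P packP.
exists (map f P); first exact: is_packing_map packP.
by rewrite size_map.
Qed.

Lemma packing_number_ball_nonincreasing (K : set 'rV[R]_n) (c : R) theta
    (eps1 eps2 : R) :
  convex_set K -> K theta -> 0 < eps1 -> eps1 <= eps2 ->
  (packing_number (eps2 / c) (eball theta eps2 `&` K) <=
   packing_number (eps1 / c) (eball theta eps1 `&` K))%E.
Proof.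
move=> cK Ktheta eps1_gt0 eps12.
have eps2_gt0 : 0 < eps2 by apply: lt_le_trans eps12.
set t := eps1 / eps2.
have t_gt0 : 0 < t by rewrite divr_gt0.
have t_ge0 := ltW t_gt0.
have t_le1 : t <= 1 by rewrite ler_pdivrMr // mul1r.
have -> : eps1 / c = t * (eps2 / c) by rewrite mulrA divfK ?gt_eqF.
apply: (packing_number_le_map (f := homothety theta t)) => //.
- by apply: homothety_inj; rewrite gt_eqF.
- move=> x [Bx Kx]; split; last by apply: homothety_convex => //; rewrite t_ge0.
  rewrite /eball /= -{1}(homothety_center theta t) edist_homothety //.
  by rewrite (le_trans (ler_wpM2l t_ge0 Bx)) // /t divfK ?gt_eqF.
- by move=> x y; rewrite edist_homothety.
Qed.

End Packing.

Theorem mainTheorem7 (R : realType) (n : nat) (K : set 'rV[R]_n) (c : R) :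
  K !=set0 -> convex_set K -> 0 < c ->
  forall eps1 eps2 : R, 0 < eps1 -> eps1 <= eps2 ->
    (Mloc K c eps2 <= Mloc K c eps1)%E.
Proof.
move=> _ cK _ eps1 eps2 eps1_gt0 eps12.
apply: ereal_sup_image_le => theta Ktheta; exists theta => //.
exact: packing_number_ball_nonincreasing.
Qed.
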